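(* Let $m\ge 2$ and $h\ge 1$ be integers and $n'=2^{3m+h-1}-2^{2m}-2^m$. Let $\mathbf{C}_0$ be a projective binary linear $[2^{2m}-1,3m]$ code whose set of nonzero weights is $\{2^{2m-1}-2^{m-1},\,2^{2m-1},\,2^{2m-1}+2^{m-1}\}$, and let $\mathbf{C}_1$ be its simplex complementary code of dimension $3m+h$, a $[2^{3m+h}-2^{2m},\ 3m+h,\ 2^{3m+h-1}-2^{2m-1}-2^{m-1}]_2$ code with maximum weight $2^{3m+h-1}$. Then the code $\mathbf{C}'$ obtained from $\mathbf{C}_1$ by the extension construction is a minimal binary linear code with parameters $[2^{3m+h}-2^{2m}+n',\ 3m+h,\ 2^{3m+h-1}-2^{2m-1}-2^{m-1}]_2$ and maximum weight $2^{3m+h}-2^{2m}-2^m$, and it violates the Ashikhmin–Barg condition.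
   Context: Projective code: columns of a generator matrix are nonzero and pairwise distinct (binary case). Simplex complementary code of a projective binary $[n,k]$ code of dimension $K=k+h$: append $h$ zeros to the columns of a generator matrix, and take the code generated by the matrix whose columns are all nonzero vectors of $\mathbf{F}_2^K$ other than these $n$ vectors. Extension construction for a binary linear $[N,K]$ code $\mathbf{D}$ with $K\ge2$, minimum nonzero weight $w_{min}$, maximum weight $w_{max}$ and $n'=2w_{min}-w_{max}\ge1$: choose a basis $\mathbf{r}_1,\dots,\mathbf{r}_K$ with $wt(\mathbf{r}_1)=w_{max}$, $wt(\mathbf{r}_2)=w_{min}$; the extended code is generated by $(\mathbf{1},\mathbf{r}_1),(\mathbf{0},\mathbf{r}_2),\dots,(\mathbf{0},\mathbf{r}_K)$ in $\mathbf{F}_2^{n'+N}$. Minimal code: any two nonzero codewords with nested supports are equal. Ashikhmin–Barg condition (binary): $w_{min}/w_{max}>1/2$. *)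

From mathcomp Require Import all_boot all_order all_algebra.
Set Implicit Arguments. Unset Strict Implicit. Unset Printing Implicit Defensive.
Import GRing.Theory Num.Theory.
Local Open Scope ring_scope.

Definition code (k n : nat) (G : 'M['F_2]_(k, n)) : {set 'rV['F_2]_n} :=
  [set u *m G | u : 'rV['F_2]_k].

Definition supp (n : nat) (x : 'rV['F_2]_n) : {set 'I_n} := [set i | x 0 i != 0].
Definition wt (n : nat) (x : 'rV['F_2]_n) : nat := #|supp x|.

Definition minwt (n : nat) (C : {set 'rV['F_2]_n}) : nat :=
  \big[minn/n]_(c in C | c != 0) wt c.
Definition maxwt (n : nat) (C : {set 'rV['F_2]_n}) : nat :=
  \max_(c in C | c != 0) wt c.

Definition is_nz_weight (n : nat) (C : {set 'rV['F_2]_n}) (w : nat) : Prop :=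
  exists2 c, c \in C & (c != 0) /\ wt c = w.

Definition projective (k n : nat) (G : 'M['F_2]_(k, n)) : Prop :=
  (forall j, col j G != 0) /\ injective (fun j => col j G).

(* G1 generates the simplex complementary code of G (of dimension k + h):
   its columns are exactly (each once) the nonzero vectors of F_2^(k+h)
   other than the columns of G padded with h zeros. *)
Definition simplex_complement (k n h N : nat) (G : 'M['F_2]_(k, n))
    (G1 : 'M['F_2]_(k + h, N)) : Prop :=
  injective (fun j => col j G1) /\
  forall v : 'cV['F_2]_(k + h),
    (exists j, col j G1 = v) <-> (v != 0 /\ forall j, v != col j (col_mx G (0 : 'M_(h, n)))).

(* Extension construction: given generator rows r_i (a basis of D), with the
   row i1 playing the role of r_1, the new generator has rows (1, r_i1) and
   (0, r_i) for i != i1, in F_2^(n' + N) with n' = 2 w_min - w_max. *)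
Definition ext_len (K N : nat) (R : 'M['F_2]_(K, N)) : nat :=
  (2 * minwt (code R) - maxwt (code R))%N.

Definition ext_gen (K N : nat) (i1 : 'I_K) (R : 'M['F_2]_(K, N)) :
    'M['F_2]_(K, ext_len R + N) :=
  row_mx (\matrix_(i < K, j < ext_len R) (i == i1)%:R) R.

Definition minimal_code (n : nat) (C : {set 'rV['F_2]_n}) : Prop :=
  forall c c', c \in C -> c' \in C -> c != 0 -> c' != 0 ->
    supp c \subset supp c' -> c = c'.

Definition AB_condition (n : nat) (C : {set 'rV['F_2]_n}) : Prop :=
  (1 / 2 : rat) < (minwt C)%:R / (maxwt C)%:R.

From mathcomp Require Import all_boot all_order all_algebra.
From mathcomp Require Import zify.
Set Implicit Arguments. Unset Strict Implicit. Unset Printing Implicit Defensive.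
Import Order.TTheory GRing.Theory Num.Theory.

(* For u <> 0, exactly half of the vectors v of F_2^(k+h) satisfy u v = 1, and the
   nonzero vectors split into the columns of G1 and the zero-padded columns of G0.
   Hence wt (u G1) = 2^(k+h-1) - wt (u' G0), u' the first k coordinates of u, so the
   weights of C1 lie between 2^(k+h-1) - w_max(C0) and 2^(k+h-1), both attained.
   A word u E of the extended code has weight [u_i1 <> 0] n' + wt (u R).  When
   n' = 2 w_min - w_max is positive, the weight of a sum of two nonzero words with
   nonzero sum is never the sum of their weights, which is minimality; and the
   largest weight n' + w_max = 2 w_min is exactly twice the smallest, so the
   Ashikhmin-Barg ratio is 1/2. *)

Local Open Scope ring_scope.

Lemma F2_cases (x : 'F_2) : x = 0 \/ x = 1.
Proof.
case: x => [[|[|k]] lt_x2]; [left | right | by []]; exact: val_inj.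
Qed.

Lemma F2_addr_neq0 (x y : 'F_2) : (x + y != 0) = (x != 0) (+) (y != 0).
Proof.
by case: (F2_cases x) => ->; case: (F2_cases y) => ->; rewrite ?addr0 ?add0r //;
  rewrite (_ : 1 + 1 = 0) //; apply: val_inj.
Qed.

Lemma wtE n (x : 'rV['F_2]_n) : wt x = (\sum_i (x 0 i != 0)%R)%N.
Proof. by rewrite /wt /supp -sum1_card big_mkcond; apply: eq_bigr => i _; rewrite inE. Qed.

Lemma wt_eq0 n (x : 'rV['F_2]_n) : (wt x == 0%N) = (x == 0).
Proof.
apply/idP/eqP => [/eqP/cards0_eq supp0 | ->]; last by rewrite wtE big1 // => i _; rewrite mxE.
apply/matrixP => i j; rewrite ord1 mxE; apply/eqP; apply: contraT => xj.
by have := in_set0 j; rewrite -supp0 inE xj.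
Qed.

Lemma wt0 n : wt (0 : 'rV['F_2]_n) = 0%N.
Proof. by apply/eqP; rewrite wt_eq0. Qed.

Lemma wt_ub n (x : 'rV['F_2]_n) : (wt x <= n)%N.
Proof. by rewrite /wt (leq_trans (max_card _)) ?card_ord. Qed.

Lemma wt_row_mx n1 n2 (x : 'rV['F_2]_n1) (y : 'rV['F_2]_n2) :
  wt (row_mx x y) = (wt x + wt y)%N.
Proof.
by rewrite !wtE big_split_ord; congr (_ + _)%N; apply: eq_bigr => i _;
  rewrite ?row_mxEl ?row_mxEr.
Qed.

Lemma wt_const_mx n (c : 'F_2) : wt (const_mx c : 'rV_n) = ((c != 0)%R * n)%N.
Proof.
by rewrite wtE (eq_bigr (fun _ => nat_of_bool (c != 0))) => [|i _];
  rewrite ?mxE // sum_nat_const card_ord mulnC.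
Qed.

Lemma wt_supp_subset n (x y : 'rV['F_2]_n) :
  supp x \subset supp y -> wt y = (wt x + wt (y - x))%N.
Proof.
move/subsetP => sub_xy; rewrite !wtE -big_split; apply: eq_bigr => i _.
have := sub_xy i; rewrite !inE !mxE.
by case: (F2_cases (x 0 i)) => ->; case: (F2_cases (y 0 i)) => ->;
  rewrite ?subr0 ?subrr ?eqxx ?oner_eq0 // => /(_ isT).
Qed.

Lemma wt_mulmx_col k n (u : 'rV['F_2]_k) (G : 'M['F_2]_(k, n)) :
  wt (u *m G) = #|[preim (fun j => col j G) of [pred v | (u *m v) 0 0 != 0]]|.
Proof.
by apply: eq_card => j; rewrite !inE colE mulmxA -colE !mxE.
Qed.

Lemma card_dot_neq0 k (u : 'rV['F_2]_k) :
  u != 0 -> #|[pred v : 'cV['F_2]_k | (u *m v) 0 0 != 0]| = (2 ^ k.-1)%N.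
Proof.
move=> u_neq0.
have [i ui] : exists i, u 0 i != 0.
  apply/existsP; apply: contraNT u_neq0 => /existsPn u0.
  by apply/eqP/matrixP => a j; rewrite ord1 mxE; exact/eqP/negbNE/u0.
pose e : 'cV['F_2]_k := delta_mx i 0.
have ue : (u *m e) 0 0 = 1.
  by rewrite -colE mxE; case: (F2_cases (u 0 i)) ui => // ->; rewrite eqxx.
pose S := [set v : 'cV['F_2]_k | (u *m v) 0 0 != 0].
have S_shift : S = (+%R^~ e) @: ~: S.
  apply/setP => v; rewrite inE; apply/idP/imsetP => [uv | [w]].
    exists (v - e); last by rewrite subrK.
    rewrite !inE negbK mulmxBr mxE [(- (u *m e)) 0 0]mxE ue.
    by case: (F2_cases ((u *m v) 0 0)) uv => ->; rewrite ?eqxx ?subrr.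
  by rewrite !inE negbK => /eqP uw ->; rewrite mulmxDr mxE uw ue add0r oner_eq0.
have cardS : #|S| = #|~: S| by rewrite {1}S_shift card_imset //; exact: addIr.
have k_gt0 : (0 < k)%N by apply: leq_ltn_trans (ltn_ord i).
have exp_k : (2 ^ k = 2 * 2 ^ k.-1)%N by rewrite -expnS prednK.
rewrite (_ : #|_| = #|S|); last by apply: eq_card => v; rewrite !inE.
have := cardsC S; rewrite -cardS card_mx card_Fp // muln1; lia.
Qed.

Lemma mem_code k n (G : 'M['F_2]_(k, n)) u : u *m G \in code G.
Proof. by apply/imsetP; exists u. Qed.

Lemma minwt_le n (C : {set 'rV['F_2]_n}) c :
  c \in C -> c != 0 -> (minwt C <= wt c)%N.
Proof.
move=> cC c_neq0; have Cc : (c \in C) && (c != 0) by rewrite cC.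
exact: (bigmin_le_cond n (@wt n) Cc).
Qed.

Lemma le_maxwt n (C : {set 'rV['F_2]_n}) c :
  c \in C -> c != 0 -> (wt c <= maxwt C)%N.
Proof. by move=> cC c_neq0; rewrite /maxwt (leq_bigmax_cond (F := @wt n)) ?cC. Qed.

Lemma minwt_eq n (C : {set 'rV['F_2]_n}) w :
  is_nz_weight C w -> (forall c, c \in C -> c != 0 -> (w <= wt c)%N) ->
  minwt C = w.
Proof.
case=> c cC [c_neq0 <-] wt_ge; apply/eqP; rewrite eqn_leq minwt_le //=.
apply: (big_ind (fun x => wt c <= x)%N); first exact: wt_ub.
  by move=> x y; rewrite leq_min => -> ->.
by move=> d /andP[]; apply: wt_ge.
Qed.

Lemma maxwt_eq n (C : {set 'rV['F_2]_n}) w :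
  is_nz_weight C w -> (forall c, c \in C -> c != 0 -> (wt c <= w)%N) ->
  maxwt C = w.
Proof.
case=> c cC [c_neq0 <-] wt_le; apply/eqP; rewrite eqn_leq le_maxwt // andbT.
by apply/bigmax_leqP => d /andP[]; apply: wt_le.
Qed.

Lemma maxwt_nz_weights n (C : {set 'rV['F_2]_n}) (s : seq nat) w :
  (forall w, is_nz_weight C w <-> w \in s) -> w \in s -> all (leq^~ w) s ->
  maxwt C = w.
Proof.
move=> C_wts sw /allP s_le; apply: maxwt_eq => [|c cC c_neq0]; first exact/C_wts.
by apply/s_le/C_wts; exists c.
Qed.

Lemma maxwt_attained n (C : {set 'rV['F_2]_n}) :
  (0 < maxwt C)%N -> is_nz_weight C (maxwt C).
Proof.
rewrite /maxwt; case: (pickP [pred c | (c \in C) && (c != 0)]) => [c Cc _ | C0].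
  have C_gt0 : (0 < #|[pred c | (c \in C) && (c != 0%R)]|)%N by apply/card_gt0P; exists c.
  by have [d /andP[dC d_neq0] ->] := eq_bigmax_cond (@wt n) C_gt0; exists d.
by rewrite big_pred0.
Qed.

Lemma wt_mulmx_le_maxwt k n (G : 'M['F_2]_(k, n)) u :
  (wt (u *m G) <= maxwt (code G))%N.
Proof.
have [-> | uG_neq0] := eqVneq (u *m G) 0; first by rewrite wt0.
exact: le_maxwt (mem_code G u) uG_neq0.
Qed.

Lemma AB_conditionN_maxwt_double n (C : {set 'rV['F_2]_n}) :
  maxwt C = (2 * minwt C)%N -> ~ AB_condition C.
Proof.
rewrite /AB_condition => ->; have [-> | min_neq0] := eqVneq (minwt C) 0%N.
  by rewrite mul0r ltNge divr_ge0.
by rewrite natrM invfM mulrCA divff ?pnatr_eq0 // mulr1 div1r ltxx.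
Qed.

Section SimplexComplement.

Variables (k h n N : nat) (G0 : 'M['F_2]_(k, n)) (G1 : 'M['F_2]_(k + h, N)).
Hypotheses (G0_proj : projective G0) (G1_compl : @simplex_complement _ _ h _ G0 G1).

Local Notation P := (col_mx G0 (0 : 'M['F_2]_(h, n))).
Local Notation W := (2 ^ (k + h).-1)%N.

Lemma col_pad j : col j P = col_mx (col j G0) 0.
Proof. by rewrite col_col_mx; congr col_mx; apply/matrixP => a b; rewrite !mxE. Qed.

Lemma mulmx_pad (u : 'rV['F_2]_(k + h)) : u *m P = lsubmx u *m G0.
Proof. by rewrite -{1}(hsubmxK u) mul_row_col mulmx0 addr0. Qed.

Lemma col_pad_inj : injective (fun j => col j P).
Proof. by move=> j j' /=; rewrite !col_pad => /eq_col_mx[/G0_proj.2]. Qed.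

Lemma col_pad_neq0 j : col j P != 0.
Proof. by rewrite col_pad col_mx_eq0 eqxx andbT G0_proj.1. Qed.

Lemma codom_pad_simplex_complement (v : 'cV['F_2]_(k + h)) : v != 0 ->
  (v \in codom (fun j => col j P)) = (v \notin codom (fun j => col j G1)).
Proof.
have [_ G1_cols] := G1_compl; move=> v_neq0.
apply/codomP/negP => [[j ->] /codomP[j' Pj] | G1v].
  by have [_ /(_ j)] := (G1_cols _).1 (ex_intro _ j' erefl); rewrite Pj eqxx.
case: (pickP (fun j => col j P == v)) => [j /eqP <- | Pv]; first by exists j.
have [|j G1j] := (G1_cols v).2; last by case: G1v; apply/codomP; exists j.
by split=> // j; rewrite eq_sym Pv.
Qed.

Lemma card_split_simplex_complement (S : {pred 'cV['F_2]_(k + h)}) :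
  0 \notin S ->
  #|S| = (#|[preim (fun j => col j G1) of S]| + #|[preim (fun j => col j P) of S]|)%N.
Proof.
move=> S0; rewrite (card_preim G1_compl.1) (card_preim col_pad_inj).
rewrite -(cardID [pred v | v \in codom (fun j => col j G1)] S); congr (_ + _)%N.
  by apply: eq_card => v; rewrite !inE andbC.
apply: eq_card => v; rewrite !inE; case Sv: (v \in S); rewrite ?andbT ?andbF //.
by rewrite codom_pad_simplex_complement //; apply: contraTneq Sv => ->.
Qed.

Lemma size_simplex_complement : (N + n)%N = (2 ^ (k + h)).-1.
Proof.
have := cardC1 (0 : 'cV['F_2]_(k + h)); rewrite card_mx card_Fp // muln1 => <-.
rewrite (card_split_simplex_complement (S := predC1 0)) ?inE ?eqxx //.
have [_ G1_cols] := G1_compl.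
congr (_ + _)%N; rewrite -[LHS]card_ord; apply: eq_card => j; rewrite !inE.
  by have [->] := (G1_cols (col j G1)).1 (ex_intro _ j erefl).
by rewrite col_pad_neq0.
Qed.

Lemma wt_simplex_complement (u : 'rV['F_2]_(k + h)) : u != 0 ->
  (wt (u *m G1) + wt (lsubmx u *m G0))%N = W.
Proof.
move=> u_neq0; rewrite -(card_dot_neq0 u_neq0) -mulmx_pad !wt_mulmx_col.
by rewrite -card_split_simplex_complement // inE mulmx0 mxE eqxx.
Qed.

Lemma wt_simplex_complement_bounds (u : 'rV['F_2]_(k + h)) : u != 0 ->
  (W - maxwt (code G0) <= wt (u *m G1) <= W)%N.
Proof.
move=> u_neq0; have := wt_simplex_complement u_neq0.
have := wt_mulmx_le_maxwt G0 (lsubmx u); lia.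
Qed.

Lemma maxwt_simplex_complement : (0 < h)%N -> maxwt (code G1) = W.
Proof.
move=> h_gt0; pose u : 'rV['F_2]_(k + h) := row_mx 0 (const_mx 1).
have u_neq0 : u != 0.
  apply/eqP => /(congr1 rsubmx); rewrite row_mxKr => /matrixP/(_ 0 (Ordinal h_gt0)).
  by rewrite !mxE; apply/eqP; exact: oner_neq0.
apply: maxwt_eq => [|c /imsetP[v _ ->] c_neq0].
  exists (u *m G1); first exact: mem_code.
  have := wt_simplex_complement u_neq0; rewrite row_mxKl mul0mx wt0 addn0 => wt_u.
  by rewrite -wt_eq0 wt_u expn_eq0.
have v_neq0 : v != 0 by apply: contraNneq c_neq0 => ->; rewrite mul0mx.
by case/andP: (wt_simplex_complement_bounds v_neq0).
Qed.

Lemma minwt_simplex_complement : (0 < maxwt (code G0) < W)%N ->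
  minwt (code G1) = (W - maxwt (code G0))%N.
Proof.
case/andP=> max0_gt0 max0_lt.
have [_ /imsetP[x _ ->] [xG_neq0 wt_xG]] := maxwt_attained max0_gt0.
pose u : 'rV['F_2]_(k + h) := row_mx x 0.
have u_neq0 : u != 0.
  rewrite row_mx_eq0 negb_and; apply/orP; left.
  by apply: contraNneq xG_neq0 => ->; rewrite mul0mx.
apply: minwt_eq => [|c /imsetP[v _ ->] c_neq0].
  exists (u *m G1); first exact: mem_code.
  have := wt_simplex_complement u_neq0; rewrite row_mxKl wt_xG => wt_u.
  by rewrite -wt_eq0; split; lia.
have v_neq0 : v != 0 by apply: contraNneq c_neq0 => ->; rewrite mul0mx.
by case/andP: (wt_simplex_complement_bounds v_neq0).
Qed.

Lemma row_free_simplex_complement : (maxwt (code G0) < W)%N -> row_free G1.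
Proof.
move=> max0_lt; apply/inj_row_free => v vG; apply/eqP; apply: contraT => v_neq0.
by have := wt_simplex_complement_bounds v_neq0; rewrite vG wt0; lia.
Qed.

End SimplexComplement.

Lemma ext_wt_nonadditive (lo hi r1 r2 r3 : nat) (b1 b2 : bool) :
    (hi < 2 * lo)%N ->
    (lo <= r1 <= hi)%N -> (lo <= r2 <= hi)%N -> (lo <= r3 <= hi)%N ->
  ((b1 (+) b2) * (2 * lo - hi) + r3 !=
     (b1 * (2 * lo - hi) + r1) + (b2 * (2 * lo - hi) + r2))%N.
Proof. by case: b1; case: b2 => /=; lia. Qed.

Section Extension.

Variables (K N : nat) (i1 i2 : 'I_K) (R : 'M['F_2]_(K, N)).

Lemma wt_ext_gen (u : 'rV['F_2]_K) :
  wt (u *m ext_gen i1 R) = ((u 0 i1 != 0)%R * ext_len R + wt (u *m R))%N.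
Proof.
rewrite /ext_gen mul_mx_row wt_row_mx -wt_const_mx; congr (wt _ + _)%N.
apply/matrixP => a j; rewrite !mxE (ord1 a) (bigD1 i1) //= mxE eqxx mulr1.
by rewrite big1 ?addr0 // => i /negbTE i_neq; rewrite mxE i_neq mulr0.
Qed.

Hypothesis R_free : row_free R.

Lemma row_free_ext_gen : row_free (ext_gen i1 R).
Proof.
apply/inj_row_free => u; rewrite /ext_gen mul_mx_row => /eqP.
by rewrite row_mx_eq0 (mulmx_free_eq0 _ R_free) => /andP[_ /eqP].
Qed.

Hypotheses (R_wt : (maxwt (code R) < 2 * minwt (code R))%N) (i12 : i1 != i2)
  (wt_r1 : wt (row i1 R) = maxwt (code R)) (wt_r2 : wt (row i2 R) = minwt (code R)).

Local Notation lo := (minwt (code R)).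
Local Notation hi := (maxwt (code R)).

Lemma wt_mulmx_bounds (u : 'rV['F_2]_K) : u != 0 -> (lo <= wt (u *m R) <= hi)%N.
Proof.
move=> u_neq0; have uR_neq0 : u *m R != 0 by rewrite (mulmx_free_eq0 _ R_free).
by rewrite minwt_le ?le_maxwt ?mem_code.
Qed.

Lemma ext_gen_neq0 (u : 'rV['F_2]_K) : u *m ext_gen i1 R != 0 -> u != 0.
Proof. by apply: contraNneq => ->; rewrite mul0mx. Qed.

Lemma wt_delta_ext_gen i :
  wt ('e_i *m ext_gen i1 R) = ((i1 == i) * ext_len R + wt (row i R))%N.
Proof.
by rewrite wt_ext_gen -rowE mxE eqxx /=; case: (i1 == i); rewrite ?oner_eq0 ?eqxx.
Qed.

Lemma minwt_gt0 : (0 < lo)%N.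
Proof. by rewrite lt0n; apply: contraTneq R_wt => ->; rewrite muln0. Qed.

Lemma ext_len_add_maxwt : (ext_len R + hi = 2 * lo)%N.
Proof. by rewrite subnK // ltnW. Qed.

Lemma minwt_ext_gen : minwt (code (ext_gen i1 R)) = lo.
Proof.
apply: minwt_eq => [|c /imsetP[u _ ->] /ext_gen_neq0/wt_mulmx_bounds/andP[lo_le _]].
  exists ('e_i2 *m ext_gen i1 R); first exact: mem_code.
  by rewrite -wt_eq0 wt_delta_ext_gen (negbTE i12) wt_r2 -lt0n minwt_gt0.
by rewrite wt_ext_gen (leq_trans lo_le) ?leq_addl.
Qed.

Lemma maxwt_ext_gen : maxwt (code (ext_gen i1 R)) = (2 * lo)%N.
Proof.
apply: maxwt_eq => [|c /imsetP[u _ ->] /ext_gen_neq0/wt_mulmx_bounds/andP[_ le_hi]].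
  exists ('e_i1 *m ext_gen i1 R); first exact: mem_code.
  rewrite -wt_eq0 wt_delta_ext_gen eqxx wt_r1 mul1n ext_len_add_maxwt.
  by rewrite muln_eq0 -lt0n minwt_gt0.
rewrite wt_ext_gen; case: (u 0 i1 != 0); rewrite ?mul1n ?mul0n ?add0n.
  by rewrite -ext_len_add_maxwt leq_add2l.
exact: leq_trans le_hi (ltnW R_wt).
Qed.

Lemma minimal_ext_gen : minimal_code (code (ext_gen i1 R)).
Proof.
move=> _ _ /imsetP[u _ ->] /imsetP[u' _ ->] c_neq0 c'_neq0.
move/wt_supp_subset/eqP; apply: contraTeq => neq.
have d_neq0 : u' - u != 0 by rewrite subr_eq0; apply: contraNneq neq => ->.
have bit_u' : (u' 0 i1 != 0) = (u 0 i1 != 0) (+) ((u' - u) 0 i1 != 0).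
  by rewrite -F2_addr_neq0 !mxE subrKC.
rewrite -mulmxBl !wt_ext_gen bit_u'; apply: ext_wt_nonadditive => //.
- exact: wt_mulmx_bounds (ext_gen_neq0 c_neq0).
- exact: wt_mulmx_bounds.
- exact: wt_mulmx_bounds (ext_gen_neq0 c'_neq0).
Qed.

Lemma ext_gen_not_AB : ~ AB_condition (code (ext_gen i1 R)).
Proof. by apply: AB_conditionN_maxwt_double; rewrite maxwt_ext_gen minwt_ext_gen. Qed.

End Extension.

Lemma pow2_facts m h : (2 <= m)%N -> (1 <= h)%N ->
  [/\ 2 ^ (3 * m + h) = 2 * 2 ^ (3 * m + h - 1), 2 ^ (2 * m) = 2 * 2 ^ (2 * m - 1),
      2 ^ m = 2 * 2 ^ (m - 1), 0 < 2 ^ (m - 1) < 2 ^ (2 * m - 1)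
    & 4 * 2 ^ (2 * m - 1) <= 2 ^ (3 * m + h - 1)]%N.
Proof.
have expn2_pred n : (0 < n)%N -> (2 ^ n = 2 * 2 ^ (n - 1))%N.
  by move=> n_gt0; rewrite -expnS subn1 prednK.
move=> hm hh; split; try by apply: expn2_pred; lia.
  by rewrite expn_gt0 ltn_exp2l //; lia.
by rewrite -[4%N]/(2 ^ 2)%N -expnD leq_exp2l //; lia.
Qed.

Local Close Scope ring_scope.
Unset Implicit Arguments.

Theorem proposition4p3 (m h : nat) (hm : (2 <= m)%N) (hh : (1 <= h)%N)
  (G0 : 'M['F_2]_(3 * m, 2 ^ (2 * m) - 1))
  (hG0rank : \rank G0 = (3 * m)%N)
  (hG0proj : projective G0)
  (hG0wts : forall w, is_nz_weight (code G0) w <->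
      w \in [:: (2 ^ (2 * m - 1) - 2 ^ (m - 1))%N; 2 ^ (2 * m - 1);
                (2 ^ (2 * m - 1) + 2 ^ (m - 1))%N])
  (N1 : nat) (G1 : 'M['F_2]_(3 * m + h, N1))
  (hG1 : @simplex_complement _ _ h _ G0 G1)
  (R : 'M['F_2]_(3 * m + h, N1))
  (hRspan : code R = code G1) (hRrank : \rank R = (3 * m + h)%N)
  (i1 i2 : 'I_(3 * m + h)) (hi12 : i1 != i2)
  (hr1 : wt (row i1 R) = maxwt (code G1))
  (hr2 : wt (row i2 R) = minwt (code G1)) :
  let n' := (2 ^ (3 * m + h - 1) - 2 ^ (2 * m) - 2 ^ m)%N in
  let C' := code (ext_gen i1 R) in
  (* parameters of C1 *)
  [/\ N1 = (2 ^ (3 * m + h) - 2 ^ (2 * m))%N, \rank G1 = (3 * m + h)%N,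
      minwt (code G1) = (2 ^ (3 * m + h - 1) - 2 ^ (2 * m - 1) - 2 ^ (m - 1))%N
    & maxwt (code G1) = 2 ^ (3 * m + h - 1)] /\
  (* parameters and properties of C' *)
  [/\ (ext_len R + N1)%N = (2 ^ (3 * m + h) - 2 ^ (2 * m) + n')%N,
      \rank (ext_gen i1 R) = (3 * m + h)%N,
      minwt C' = (2 ^ (3 * m + h - 1) - 2 ^ (2 * m - 1) - 2 ^ (m - 1))%N,
      maxwt C' = (2 ^ (3 * m + h) - 2 ^ (2 * m) - 2 ^ m)%N
    & minimal_code C' /\ ~ AB_condition C'].
Proof.
move=> n' C'; rewrite /n'.
set A := (2 ^ (3 * m + h - 1))%N; set a := (2 ^ (2 * m - 1))%N; set b := (2 ^ (m - 1))%N.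
have := pow2_facts hm hh; rewrite -/A -/a -/b => -[eA ea eb /andP[b_gt0 b_lt_a] a_le_A].
have W_eq : (2 ^ (3 * m + h).-1)%N = A by rewrite -subn1.
rewrite -/a -/b in hG0wts; clearbody A a b.
have max0 : maxwt (code G0) = (a + b)%N.
  by apply: (maxwt_nz_weights hG0wts); rewrite ?inE ?eqxx ?orbT //=; lia.
have max0_lt : (0 < maxwt (code G0) < 2 ^ (3 * m + h).-1)%N by rewrite max0 W_eq; lia.
have min1 := minwt_simplex_complement hG0proj hG1 max0_lt.
have max1 := maxwt_simplex_complement hG0proj hG1 hh.
have free1 := row_free_simplex_complement hG0proj hG1 (proj2 (andP max0_lt)).
have size1 := size_simplex_complement hG0proj hG1; rewrite eA ea in size1.
rewrite max0 W_eq subnDA in min1; rewrite W_eq in max1.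
have R_free : row_free R by rewrite /row_free hRrank.
rewrite -hRspan in hr1 hr2 min1 max1.
have R_wt : (maxwt (code R) < 2 * minwt (code R))%N by rewrite min1 max1; lia.
rewrite /C' eA ea eb (minwt_ext_gen R_free R_wt hi12 hr2).
rewrite (maxwt_ext_gen R_free R_wt hr1) -hRspan min1 max1.
split; split.
- by clear -size1 b_lt_a; lia.
- exact/eqP.
- by [].
- by [].
- by rewrite /ext_len min1 max1; clear -size1 b_lt_a a_le_A; lia.
- exact/eqP/row_free_ext_gen.
- by [].
- by clear -b_lt_a a_le_A; lia.
- split; first exact: minimal_ext_gen R_free R_wt.
  exact: ext_gen_not_AB R_free R_wt hi12 hr1 hr2.
Qed.
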